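(* Let $\Gamma$ be a finite connected adequate graph. Then there is a unique (up to isomorphism) irreducible adequate graph $\Gamma_0$ for which there exists a chromatic covering $q:\Gamma\to\Gamma_0$. This covering map $q$ is unique, and an automorphism $\phi:\Gamma\to\Gamma$ preserves the coloring of $\Gamma$ if and only if it is a deck transformation of $q$.
   Context: Fix $r\geq1$ and a type $((p_i,q_i))_{i=1}^r\in(\mathbb{N}^2)^r$. A graph $\Gamma=(V,E)$ consists of sets $V,E$ and maps $s,t:E\to V$ (loops and multiple edges allowed), identified with its topological realization; a morphism of graphs is a pair of maps on vertices and edges compatible with $s,t$, and a covering is a surjective morphism that is a local homeomorphism. An adequate graph is a graph with colorings $c:V\to\{1,\dots,r\}$, $c_o,c_i:E\to\mathbb{N}$ such that if $c(v)=a$ then there are exactly $p_a$ edges with source $v$, with $c_o$-values exactly $\{1,\dots,p_a\}$, and exactly $q_a$ edges with target $v$, with $c_i$-values exactly $\{1,\dots,q_a\}$. A morphism is chromatic if it preserves $c$, $c_o$ and $c_i$. A finite connected adequate graph $\Gamma_0$ is irreducible if every chromatic morphism from $\Gamma_0$ to an adequate graph is an isomorphism. *)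

From mathcomp Require Import all_boot.
From Stdlib Require Import Relation_Operators List.

Set Implicit Arguments.
Unset Strict Implicit.
Unset Printing Implicit Defensive.

(* A type ((p_a,q_a))_{a} of adequate graphs, with vertex colours 'I_r
   (colour a : 'I_r stands for the paper's colour a+1 in {1,...,r}). *)

Definition adequate_axiom (r : nat) (p q : 'I_r -> nat) (V E : Type)
    (s t : E -> V) (c : V -> 'I_r) (co ci : E -> nat) : Prop :=
  forall v : V,
    ((forall e, s e = v -> 1 <= co e <= p (c v)) /\
     (forall e1 e2, s e1 = v -> s e2 = v -> co e1 = co e2 -> e1 = e2) /\
     (forall k, 1 <= k <= p (c v) -> exists e, s e = v /\ co e = k)) /\
    ((forall e, t e = v -> 1 <= ci e <= q (c v)) /\
     (forall e1 e2, t e1 = v -> t e2 = v -> ci e1 = ci e2 -> e1 = e2) /\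
     (forall k, 1 <= k <= q (c v) -> exists e, t e = v /\ ci e = k)).

Record adequate_graph (r : nat) (p q : 'I_r -> nat) := AdequateGraph {
  gV : Type;
  gE : Type;
  gs : gE -> gV;
  gt : gE -> gV;
  gc : gV -> 'I_r;
  gco : gE -> nat;
  gci : gE -> nat;
  gadequate : adequate_axiom p q gs gt gc gco gci
}.

Section Graphs.
Variables (r : nat) (p q : 'I_r -> nat).

Definition finite_type (T : Type) : Prop := exists l : list T, forall x, In x l.

Definition finite_graph (G : adequate_graph p q) : Prop :=
  finite_type (gV G) /\ finite_type (gE G).

Definition adjacent (G : adequate_graph p q) (u v : gV G) : Prop :=
  exists e, gs e = u /\ gt e = v.

Definition connected_graph (G : adequate_graph p q) : Prop :=
  inhabited (gV G) /\
  forall u v : gV G, clos_refl_sym_trans (gV G) (@adjacent G) u v.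

Record gmorphism (G H : adequate_graph p q) := GMorphism {
  mV : gV G -> gV H;
  mE : gE G -> gE H;
  m_src : forall e, gs (mE e) = mV (gs e);
  m_tgt : forall e, gt (mE e) = mV (gt e)
}.

Definition chromatic (G H : adequate_graph p q) (f : gmorphism G H) : Prop :=
  (forall v, gc (mV f v) = gc v) /\
  (forall e, gco (mE f e) = gco e) /\
  (forall e, gci (mE f e) = gci e).

Definition gisomorphism (G H : adequate_graph p q) (f : gmorphism G H) : Prop :=
  bijective (mV f) /\ bijective (mE f).

(* Covering: surjective morphism which is a local homeomorphism, i.e. for
   every vertex v it maps the star of v (half-edges at v) bijectively onto
   the star of its image. *)
Definition covering (G H : adequate_graph p q) (f : gmorphism G H) : Prop :=
  (forall w, exists v, mV f v = w) /\
  (forall e', exists e, mE f e = e') /\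
  (forall v (e' : gE H), gs e' = mV f v ->
       exists e, (gs e = v /\ mE f e = e') /\
                 forall e2, gs e2 = v /\ mE f e2 = e' -> e2 = e) /\
  (forall v (e' : gE H), gt e' = mV f v ->
       exists e, (gt e = v /\ mE f e = e') /\
                 forall e2, gt e2 = v /\ mE f e2 = e' -> e2 = e).

Definition irreducible (G0 : adequate_graph p q) : Prop :=
  finite_graph G0 /\ connected_graph G0 /\
  forall (H : adequate_graph p q) (f : gmorphism G0 H),
    connected_graph H -> chromatic f -> gisomorphism f.

Definition morph_eq (G H : adequate_graph p q) (f g : gmorphism G H) : Prop :=
  (forall v, mV f v = mV g v) /\ (forall e, mE f e = mE g e).

Definition deck_transformation (G H : adequate_graph p q)
    (qq : gmorphism G H) (phi : gmorphism G G) : Prop :=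
  gisomorphism phi /\
  (forall v, mV qq (mV phi v) = mV qq v) /\
  (forall e, mE qq (mE phi e) = mE qq e).

End Graphs.

(* The view of a vertex v records, for every word of labels read along a walk
   from v (forward along the out-edge with a given c_o-label, or backward along
   the in-edge with a given c_i-label), the colour of the endpoint; by adequacy
   such a walk is unique when it exists.  A chromatic morphism between adequate
   graphs lifts labelled edges uniquely, hence preserves views, and onto a
   connected graph it is a covering.  Identifying vertices with equal views, and
   out-edges with equal labels at such vertices, yields an adequate quotient G0
   of G; a chromatic map out of G0 preserves views, so it is injective and G0 is
   irreducible.  Distinct vertices of an irreducible graph have distinct views,
   so a chromatic map into it is determined by views: this gives the uniqueness
   of G0 and of the covering, and q o phi = q for every chromatic phi. *)

From Stdlib Require Import Relation_Operators ProofIrrelevance.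
From Stdlib Require Import FunctionalExtensionality PropExtensionality ClassicalEpsilon.
From mathcomp Require Import all_boot.

Set Implicit Arguments.
Unset Strict Implicit.
Unset Printing Implicit Defensive.

Lemma sig_val_inj (A : Type) (P : A -> Prop) : injective (@proj1_sig A P).
Proof. exact: eq_sig_hprop (fun x => @proof_irrelevance (P x)). Qed.

Lemma inj_surj_bij (A B : Type) (f : A -> B) :
  injective f -> (forall b, exists a, f a = b) -> bijective f.
Proof.
move=> f_inj f_surj.
pose g b := proj1_sig (constructive_indefinite_description _ (f_surj b)).
have gK : cancel g f.
  by move=> b; rewrite /g; case: constructive_indefinite_description.
by exists g => // a; apply: f_inj; rewrite gK.
Qed.

Inductive step := Fwd of nat & nat | Bwd of nat & nat.

Section AdequateGraphs.
Variables (r : nat) (p q : 'I_r -> nat).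
Notation graph := (adequate_graph p q).

Section Labels.
Variable G : graph.

Lemma gco_range (e : gE G) : 1 <= gco e <= p (gc (gs e)).
Proof. by have [[+ _] _] := gadequate (gs e); apply. Qed.

Lemma gco_inj (e1 e2 : gE G) : gs e1 = gs e2 -> gco e1 = gco e2 -> e1 = e2.
Proof. by move=> s12; have [[_ [+ _]] _] := gadequate (gs e2); apply. Qed.

Lemma gco_onto (v : gV G) k : 1 <= k <= p (gc v) -> exists2 e, gs e = v & gco e = k.
Proof. by have [[_ [_ onto]] _] := gadequate v => /onto [e []]; exists e. Qed.

Lemma gci_range (e : gE G) : 1 <= gci e <= q (gc (gt e)).
Proof. by have [_ [+ _]] := gadequate (gt e); apply. Qed.

Lemma gci_inj (e1 e2 : gE G) : gt e1 = gt e2 -> gci e1 = gci e2 -> e1 = e2.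
Proof. by move=> t12; have [_ [_ [+ _]]] := gadequate (gt e2); apply. Qed.

Lemma gci_onto (v : gV G) k : 1 <= k <= q (gc v) -> exists2 e, gt e = v & gci e = k.
Proof. by have [_ [_ [_ onto]]] := gadequate v => /onto [e []]; exists e. Qed.

Fixpoint view (v : gV G) (w : seq step) (a : 'I_r) : Prop :=
  match w with
  | [::] => gc v = a
  | Fwd k j :: w' => exists e, [/\ gs e = v, gco e = k, gci e = j & view (gt e) w' a]
  | Bwd j k :: w' => exists e, [/\ gt e = v, gci e = j, gco e = k & view (gs e) w' a]
  end.

End Labels.

Lemma view_ext (G H : graph) (u : gV G) (v : gV H) :
  (forall w a, view u w a <-> view v w a) -> view u = view v.
Proof.
move=> uv; do 2![apply: functional_extensionality => ?].
exact: propositional_extensionality.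
Qed.

Lemma view_color (G H : graph) (u : gV G) (v : gV H) : view u = view v -> gc u = gc v.
Proof. by move=> uv; have : view u [::] (gc u) by []; rewrite uv. Qed.

Section Views.
Variable G : graph.

Lemma view_fwd (e : gE G) w a :
  view (gs e) (Fwd (gco e) (gci e) :: w) a <-> view (gt e) w a.
Proof. by split=> [[e' [s' c' _]]|]; [rewrite (gco_inj s' c') | exists e]. Qed.

Lemma view_bwd (e : gE G) w a :
  view (gt e) (Bwd (gci e) (gco e) :: w) a <-> view (gs e) w a.
Proof. by split=> [[e' [t' c' _]]|]; [rewrite (gci_inj t' c') | exists e]. Qed.

Lemma view_fwd_det (e1 e2 : gE G) :
  view (gs e1) = view (gs e2) -> gco e1 = gco e2 ->
  gci e1 = gci e2 /\ view (gt e1) = view (gt e2).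
Proof.
move=> s12 c12.
have ci12 : gci e1 = gci e2.
  have : view (gs e1) [:: Fwd (gco e1) (gci e1)] (gc (gt e1)) by apply/view_fwd.
  by rewrite s12 c12 => -[e [s c <- _]]; rewrite (gco_inj s c).
split=> //; apply: view_ext => w a.
by rewrite -view_fwd -[X in _ <-> X]view_fwd s12 c12 ci12.
Qed.

Lemma view_bwd_det (e1 e2 : gE G) :
  view (gt e1) = view (gt e2) -> gci e1 = gci e2 ->
  gco e1 = gco e2 /\ view (gs e1) = view (gs e2).
Proof.
move=> t12 c12.
have co12 : gco e1 = gco e2.
  have : view (gt e1) [:: Bwd (gci e1) (gco e1)] (gc (gs e1)) by apply/view_bwd.
  by rewrite t12 c12 => -[e [t c <- _]]; rewrite (gci_inj t c).
split=> //; apply: view_ext => w a.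
by rewrite -view_bwd -[X in _ <-> X]view_bwd t12 c12 co12.
Qed.

End Views.

Section ChromaticMorphism.
Variables (G H : graph) (f : gmorphism G H).
Hypothesis f_chrom : chromatic f.

Lemma chromatic_lift_out v (e' : gE H) :
  gs e' = mV f v -> exists2 e, gs e = v & mE f e = e'.
Proof.
case: f_chrom => fc [fco _] s'.
have := gco_range e'; rewrite s' fc => /(gco_onto (G:=G)) [e s c].
by exists e => //; apply: gco_inj; [rewrite m_src s s' | rewrite fco].
Qed.

Lemma chromatic_lift_in v (e' : gE H) :
  gt e' = mV f v -> exists2 e, gt e = v & mE f e = e'.
Proof.
case: f_chrom => fc [_ fci] t'.
have := gci_range e'; rewrite t' fc => /(gci_onto (G:=G)) [e t c].
by exists e => //; apply: gci_inj; [rewrite m_tgt t t' | rewrite fci].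
Qed.

Lemma view_chromatic v : view (mV f v) = view v.
Proof.
case: (f_chrom) => fc [fco fci].
apply: view_ext => w; elim: w v => [|[k j|j k] w IH] v a /=; first by rewrite fc.
- split=> [[e' [s' <- <- ve']] | [e [s <- <- ve]]].
    have [e s fe] := chromatic_lift_out s'; subst e'.
    by exists e; split; rewrite ?fco ?fci // -IH -m_tgt.
  by exists (mE f e); split; rewrite ?m_src ?s ?fco ?fci // m_tgt IH.
- split=> [[e' [t' <- <- ve']] | [e [t <- <- ve]]].
    have [e t fe] := chromatic_lift_in t'; subst e'.
    by exists e; split; rewrite ?fco ?fci // -IH -m_src.
  by exists (mE f e); split; rewrite ?m_tgt ?t ?fco ?fci // m_src IH.
Qed.

Lemma chromatic_surj_vertices :
  inhabited (gV G) -> connected_graph H -> forall w, exists v, mV f v = w.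
Proof.
move=> [v0] [_ H_conn] w.
suff image_closed x y : clos_refl_sym_trans _ (@adjacent _ _ _ H) x y ->
    (exists v, mV f v = x) <-> (exists v, mV f v = y).
  by apply/(image_closed _ _ (H_conn (mV f v0) w)); exists v0.
elim=> {x y} [x y [e' [<- <-]] | | | ]; try tauto.
split=> -[v fv].
  by have [e _ <-] := chromatic_lift_out (esym fv); exists (gt e); rewrite m_tgt.
by have [e _ <-] := chromatic_lift_in (esym fv); exists (gs e); rewrite m_src.
Qed.

Lemma chromatic_covering : inhabited (gV G) -> connected_graph H -> covering f.
Proof.
move=> G_inh H_conn; have surjV := chromatic_surj_vertices G_inh H_conn.
case: f_chrom => _ [fco fci].
split=> //; split; [|split].
- move=> e'; have [v fv] := surjV (gs e').
  by have [e _ <-] := chromatic_lift_out (esym fv); exists e.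
- move=> v e' /chromatic_lift_out [e s fe]; exists e; split=> // e2 [s2 fe2].
  by apply: gco_inj; rewrite ?s ?s2 // -fco fe2 -fe fco.
- move=> v e' /chromatic_lift_in [e t fe]; exists e; split=> // e2 [t2 fe2].
  by apply: gci_inj; rewrite ?t ?t2 // -fci fe2 -fe fci.
Qed.

Lemma chromatic_inj_edges : injective (mV f) -> injective (mE f).
Proof.
case: f_chrom => _ [fco _] injV e1 e2 fe.
by apply: gco_inj; [apply: injV; rewrite -!m_src fe | rewrite -fco fe fco].
Qed.

End ChromaticMorphism.

Section Image.
Variables (G H : graph) (f : gmorphism G H).
Hypothesis surjV : forall w, exists v, mV f v = w.

Lemma connected_image : connected_graph G -> connected_graph H.
Proof.
case=> [[v0] G_conn]; split; first exact: inhabits (mV f v0).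
move=> x y; have [u <-] := surjV x; have [v <-] := surjV y.
elim: (G_conn u v) => {u v} [u v [e [<- <-]]|u|u v _ ?|u v w _ uv _ vw].
- by apply: rst_step; exists (mE f e); rewrite m_src m_tgt.
- exact: rst_refl.
- exact: rst_sym.
- exact: rst_trans uv vw.
Qed.

Lemma finite_image :
  (forall e', exists e, mE f e = e') -> finite_graph G -> finite_graph H.
Proof.
move=> surjE [[lv lvP] [le leP]]; split.
  by exists (List.map (mV f) lv) => x; have [v <-] := surjV x; apply: List.in_map.
by exists (List.map (mE f) le) => y; have [e <-] := surjE y; apply: List.in_map.
Qed.

End Image.

Definition gmorphism_comp (G H K : graph) (f : gmorphism G H) (g : gmorphism H K) :
    gmorphism G K :=
  @GMorphism _ _ _ G K (fun v => mV g (mV f v)) (fun e => mE g (mE f e))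
    (fun e => etrans (m_src g (mE f e)) (congr1 (mV g) (m_src f e)))
    (fun e => etrans (m_tgt g (mE f e)) (congr1 (mV g) (m_tgt f e))).

Lemma chromatic_comp (G H K : graph) (f : gmorphism G H) (g : gmorphism H K) :
  chromatic f -> chromatic g -> chromatic (gmorphism_comp f g).
Proof.
move=> [c_f [co_f ci_f]] [c_g [co_g ci_g]].
by split; [|split] => x /=; rewrite ?c_g ?c_f ?co_g ?co_f ?ci_g ?ci_f.
Qed.

Section Quotient.
Variable G : graph.

Definition qvertex := {W : seq step -> 'I_r -> Prop | exists v : gV G, view v = W}.
Definition qedge :=
  {y : (seq step -> 'I_r -> Prop) * nat | exists e : gE G, (view (gs e), gco e) = y}.

Definition qclass (v : gV G) : qvertex := exist _ (view v) (ex_intro _ v erefl).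
Definition qclass_edge (e : gE G) : qedge :=
  exist _ (view (gs e), gco e) (ex_intro _ e erefl).

Definition qrep (x : qvertex) : gV G :=
  proj1_sig (constructive_indefinite_description _ (proj2_sig x)).
Definition qrep_edge (y : qedge) : gE G :=
  proj1_sig (constructive_indefinite_description _ (proj2_sig y)).

Lemma eq_qclass u v : qclass u = qclass v <-> view u = view v.
Proof. by split=> [/(congr1 (@proj1_sig _ _)) | uv]; last apply: sig_val_inj. Qed.

Lemma qclass_edge_eq e1 e2 :
  view (gs e1) = view (gs e2) -> gco e1 = gco e2 -> qclass_edge e1 = qclass_edge e2.
Proof. by move=> s12 c12; apply: sig_val_inj; rewrite /= s12 c12. Qed.

Lemma qrepK : cancel qrep qclass.
Proof.
move=> x; apply: sig_val_inj.
by rewrite /qrep; case: constructive_indefinite_description.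
Qed.

Lemma qrep_edgeK : cancel qrep_edge qclass_edge.
Proof.
move=> y; apply: sig_val_inj.
by rewrite /qrep_edge; case: constructive_indefinite_description.
Qed.

Lemma view_qrep v : view (qrep (qclass v)) = view v.
Proof. exact/eq_qclass/qrepK. Qed.

Lemma qrep_edge_class e :
  view (gs (qrep_edge (qclass_edge e))) = view (gs e) /\
  gco (qrep_edge (qclass_edge e)) = gco e.
Proof. by have /(congr1 (@proj1_sig _ _)) [-> ->] := qrep_edgeK (qclass_edge e). Qed.

Definition qs (y : qedge) : qvertex := qclass (gs (qrep_edge y)).
Definition qt (y : qedge) : qvertex := qclass (gt (qrep_edge y)).
Definition qc (x : qvertex) : 'I_r := gc (qrep x).
Definition qco (y : qedge) : nat := gco (qrep_edge y).
Definition qci (y : qedge) : nat := gci (qrep_edge y).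

Lemma qsE e : qs (qclass_edge e) = qclass (gs e).
Proof. by apply/eq_qclass; have [] := qrep_edge_class e. Qed.

Lemma qcoE e : qco (qclass_edge e) = gco e.
Proof. by have [] := qrep_edge_class e. Qed.

Lemma qtE e : qt (qclass_edge e) = qclass (gt e).
Proof.
by apply/eq_qclass; have [s c] := qrep_edge_class e; case: (view_fwd_det s c).
Qed.

Lemma qciE e : qci (qclass_edge e) = gci e.
Proof. by have [s c] := qrep_edge_class e; case: (view_fwd_det s c). Qed.

Lemma qcE v : qc (qclass v) = gc v.
Proof. exact: view_color (view_qrep v). Qed.

Lemma quotient_adequate : adequate_axiom p q qs qt qc qco qci.
Proof.
move=> X; rewrite -(qrepK X); set v := qrep X.
split; split; [|split| |split].
- move=> y; rewrite -(qrep_edgeK y) qsE qcoE qcE => /eq_qclass/view_color <-.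
  exact: gco_range.
- move=> y1 y2; rewrite -(qrep_edgeK y1) -(qrep_edgeK y2) !qsE !qcoE.
  by move=> /eq_qclass s1 /eq_qclass s2; apply: qclass_edge_eq; rewrite s1 s2.
- move=> k; rewrite qcE => /gco_onto [e s c].
  by exists (qclass_edge e); rewrite qsE qcoE s.
- move=> y; rewrite -(qrep_edgeK y) qtE qciE qcE => /eq_qclass/view_color <-.
  exact: gci_range.
- move=> y1 y2; rewrite -(qrep_edgeK y1) -(qrep_edgeK y2) !qtE !qciE.
  move=> /eq_qclass t1 /eq_qclass t2 c12.
  by have [c s] := view_bwd_det (etrans t1 (esym t2)) c12; apply: qclass_edge_eq.
- move=> k; rewrite qcE => /gci_onto [e t c].
  by exists (qclass_edge e); rewrite qtE qciE t.
Qed.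

Definition quotient : graph := AdequateGraph quotient_adequate.

Definition qproj : gmorphism G quotient :=
  @GMorphism _ _ _ G quotient qclass qclass_edge qsE qtE.

Lemma qproj_chromatic : chromatic qproj.
Proof. exact: conj qcE (conj qcoE qciE). Qed.

Lemma qproj_surj_vertices (x : gV quotient) : exists v, mV qproj v = x.
Proof. by exists (qrep x); apply: qrepK. Qed.

Lemma qproj_surj_edges (y : gE quotient) : exists e, mE qproj e = y.
Proof. by exists (qrep_edge y); apply: qrep_edgeK. Qed.

Lemma quotient_view_inj (x1 x2 : gV quotient) : view x1 = view x2 -> x1 = x2.
Proof.
have [v1 <-] := qproj_surj_vertices x1; have [v2 <-] := qproj_surj_vertices x2.
by rewrite !(view_chromatic qproj_chromatic) => /eq_qclass.
Qed.

Lemma quotient_irreducible : finite_graph G -> connected_graph G -> irreducible quotient.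
Proof.
move=> G_fin G_conn.
have Q_conn := connected_image qproj_surj_vertices G_conn.
split; first exact: finite_image qproj_surj_vertices qproj_surj_edges G_fin.
split=> // H f H_conn f_chrom.
have [surjV [surjE _]] := chromatic_covering f_chrom Q_conn.1 H_conn.
have injV : injective (mV f).
  move=> x1 x2 f12; apply: quotient_view_inj.
  by rewrite -!(view_chromatic f_chrom) f12.
by split; apply: inj_surj_bij => //; apply: chromatic_inj_edges.
Qed.

End Quotient.

Lemma irreducible_view_inj (H : graph) (u v : gV H) :
  irreducible H -> view u = view v -> u = v.
Proof.
move=> [_ [H_conn H_irr]] uv.
have Q_conn := connected_image (@qproj_surj_vertices H) H_conn.
have [[g gK _] _] := H_irr _ _ Q_conn (qproj_chromatic H).
by rewrite -(gK u) -(gK v); congr g; apply/eq_qclass.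
Qed.

Section IntoIrreducible.
Variables (G H : graph).
Hypothesis H_irr : irreducible H.

Lemma chromatic_view_eq (f : gmorphism G H) u v :
  chromatic f -> view u = view v -> mV f u = mV f v.
Proof.
move=> f_chrom uv; apply: irreducible_view_inj => //.
by rewrite !(view_chromatic f_chrom).
Qed.

Lemma chromatic_morphism_unique (f g : gmorphism G H) :
  chromatic f -> chromatic g -> morph_eq f g.
Proof.
move=> f_chrom g_chrom.
have fgV v : mV f v = mV g v.
  apply: irreducible_view_inj => //.
  by rewrite (view_chromatic f_chrom) (view_chromatic g_chrom).
split=> // e; apply: gco_inj; first by rewrite !m_src fgV.
by rewrite f_chrom.2.1 g_chrom.2.1.
Qed.

Section QuotientLift.
Variable f : gmorphism G H.
Hypothesis f_chrom : chromatic f.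

Lemma quotient_lift_src (y : qedge G) :
  gs (mE f (qrep_edge y)) = mV f (qrep (qs y)).
Proof. by rewrite m_src; apply: chromatic_view_eq; rewrite ?view_qrep. Qed.

Lemma quotient_lift_tgt (y : qedge G) :
  gt (mE f (qrep_edge y)) = mV f (qrep (qt y)).
Proof. by rewrite m_tgt; apply: chromatic_view_eq; rewrite ?view_qrep. Qed.

Definition quotient_lift : gmorphism (quotient G) H :=
  @GMorphism _ _ _ (quotient G) H (fun x => mV f (qrep x)) (fun y => mE f (qrep_edge y))
    quotient_lift_src quotient_lift_tgt.

Lemma quotient_lift_chromatic : chromatic quotient_lift.
Proof.
by case: f_chrom => fc [fco fci]; split; [|split] => x /=; rewrite ?fc ?fco ?fci.
Qed.

End QuotientLift.

Lemma chromatic_iff_deck (qq : gmorphism G H) (phi : gmorphism G G) :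
  chromatic qq -> gisomorphism phi -> chromatic phi <-> deck_transformation qq phi.
Proof.
move=> qq_chrom phi_iso; split=> [phi_chrom | [_ [qphiV qphiE]]].
  by split=> //; apply: chromatic_morphism_unique (chromatic_comp _ _) _.
case: qq_chrom => c_q [co_q ci_q].
by split; [|split] => x; rewrite -?c_q -?co_q -?ci_q ?qphiV ?qphiE.
Qed.

End IntoIrreducible.

End AdequateGraphs.

Theorem proposition3p13 (r : nat) (p q : 'I_r -> nat) (r_pos : 0 < r)
    (G : adequate_graph p q) :
  finite_graph G -> connected_graph G ->
  exists (G0 : adequate_graph p q) (qq : gmorphism G G0),
    irreducible G0 /\ chromatic qq /\ covering qq /\
    (* uniqueness of G0 up to (chromatic) isomorphism *)
    (forall (G1 : adequate_graph p q) (q1 : gmorphism G G1),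
        irreducible G1 -> chromatic q1 -> covering q1 ->
        exists iso : gmorphism G0 G1, chromatic iso /\ gisomorphism iso) /\
    (* uniqueness of the covering map *)
    (forall q' : gmorphism G G0, chromatic q' -> covering q' -> morph_eq q' qq) /\
    (* colour-preserving automorphisms = deck transformations *)
    (forall phi : gmorphism G G, gisomorphism phi ->
        (chromatic phi <-> deck_transformation qq phi)).
Proof.
move=> G_fin G_conn.
have Q_irr := quotient_irreducible G_fin G_conn.
have q_chrom := qproj_chromatic G.
exists (quotient G), (qproj G); split=> //; split=> //; split.
  exact: chromatic_covering q_chrom G_conn.1 Q_irr.2.1.
split.
  move=> G1 q1 G1_irr q1_chrom _.
  exists (quotient_lift G1_irr q1_chrom); split; first exact: quotient_lift_chromatic.
  by apply: Q_irr.2.2; [exact: G1_irr.2.1 | exact: quotient_lift_chromatic].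
split; first by move=> q' q'_chrom _; apply: chromatic_morphism_unique.
by move=> phi; apply: chromatic_iff_deck.
Qed.
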